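(* Let $n\geq0$ be an integer and $i\in\{1,2,3\}$. Then $\dim_{\mathbb C}\mathscr M_n(x_i)=0$ if $n<t_i$, and $\dim_{\mathbb C}\mathscr M_n(x_i)=2(n-t_i+1)$ if $n\geq t_i$.
   Context: Fix real numbers $k_1,k_2,k_3$. For $i=1,2,3$ let $R_i$ be the operator on functions on $\mathbb R^3$ replacing $x_i$ by $-x_i$, and $T_if=\frac{\partial f}{\partial x_i}+k_i\frac{f-R_if}{x_i}$ (Dunkl operators). Let $\sigma_1=\begin{pmatrix}0&1\\1&0\end{pmatrix}$, $\sigma_2=\begin{pmatrix}0&-\sqrt{-1}\\ \sqrt{-1}&0\end{pmatrix}$, $\sigma_3=\begin{pmatrix}1&0\\0&-1\end{pmatrix}$, and let $e_i$ act on $\mathbb C^2$ by $\sigma_i$. Tensor products are over $\mathbb R$; $\mathbb R[\cdots]_m$ denotes homogeneous polynomials of degree $m$. Let $\mathbf D=e_1\otimes T_1+e_2\otimes T_2+e_3\otimes T_3$ and $\mathscr M_n=\ker(\mathbf D|_{\mathbb C^2\otimes\mathbb R[x_1,x_2,x_3]_n})$. For $i=1,2,3$ set $t_i=-2k_i$ if $2k_i$ is an odd negative integer, and $t_i=\infty$ otherwise. For $i=1,2,3$, $\mathscr M_n(x_i)=\mathscr M_n\cap\bigoplus_{j=t_i}^n\mathbb C^2\otimes(x_i^j\cdot\mathbb R[x_p,x_q]_{n-j})$ where $\{p,q\}=\{1,2,3\}\setminus\{i\}$, interpreted as $\{0\}$ if $n<t_i$. *)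

From HB Require Import structures.
From mathcomp Require Import all_boot all_order all_algebra.
From mathcomp Require Import mpoly.
Set Implicit Arguments. Unset Strict Implicit. Unset Printing Implicit Defensive.
Import Order.TTheory GRing.Theory Num.Theory.
Local Open Scope ring_scope.

(* Complex field: an arbitrary numClosedFieldType C (e.g. complex numbers);
   "real numbers" k_i are elements of C with k_i \is Num.real.
   Variables x_1,x_2,x_3 are indexed by 'I_3 = {0,1,2}.
   C^2 (x)_R R[x1,x2,x3]  =  C[x1,x2,x3]^2, modelled as {ffun 'I_2 -> {mpoly C[3]}}. *)

Section Dunkl.
Variable C : numClosedFieldType.
Notation P := {mpoly C[3]}.

Definition refl (i : 'I_3) (f : P) : P :=
  comp_mpoly [tuple (if j == i then - 'X_j else 'X_j) | j < 3] f.

(* the quotient (g)/x_i of a polynomial g by the monomial x_i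
   (exact when x_i divides g): every monomial x^m is sent to x^(m - e_i) *)
Definition divX (i : 'I_3) (g : P) : P :=
  \sum_(m <- msupp g) g@_m *: 'X_[m - U_(i)].

Definition dunkl (k : 'I_3 -> C) (i : 'I_3) (f : P) : P :=
  mderiv i f + k i *: divX i (f - refl i f).

Definition sigma (j : 'I_3) : 'M[C]_2 :=
  if val j == 0%N then \matrix_(r < 2, s < 2) (if r == s then 0 else 1)
  else if val j == 1%N then
    \matrix_(r < 2, s < 2)
      (if r == s then 0 else if val r == 0%N then - 'i else 'i)
  else \matrix_(r < 2, s < 2)
      (if r == s then (if val r == 0%N then 1 else -1) else 0).

Definition dirac (k : 'I_3 -> C) (v : {ffun 'I_2 -> P}) : {ffun 'I_2 -> P} :=
  [ffun r => \sum_(j < 3) \sum_(s < 2) sigma j r s *: dunkl k j (v s)].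

Definition homogeneous (n : nat) (f : P) : Prop :=
  forall m, m \in msupp f -> mdeg m = n.

Definition Mn (k : 'I_3 -> C) (n : nat) (v : {ffun 'I_2 -> P}) : Prop :=
  (forall r, homogeneous n (v r)) /\ dirac k v = 0.

(* t_i as an element of nat + {infinity} (None = infinity):
   tparam k t  <->  t is the value of t_i = -2k if 2k is an odd negative integer,
   infinity otherwise *)
Definition tparam (k : C) (t : option nat) : Prop :=
  match t with
  | Some t => odd t /\ 2 * k = - (t%:R)
  | None => forall t : nat, odd t -> 2 * k != - (t%:R)
  end.

(* M_n(x_i) with lower bound t (t = None meaning infinity, i.e. {0}):
   elements of M_n all of whose monomials x^m have m_i >= t *)
Definition Mnx (k : 'I_3 -> C) (n : nat) (i : 'I_3) (t : option nat)
    (v : {ffun 'I_2 -> P}) : Prop :=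
  match t with
  | None => v = 0
  | Some t => Mn k n v /\ forall r m, m \in msupp (v r) -> (t <= m i)%N
  end.

End Dunkl.

Definition dimC_eq (C : fieldType) (V : lmodType C) (S : V -> Prop) (d : nat) : Prop :=
  exists b : 'I_d -> V,
    (forall j, S (b j)) /\
    (forall c : 'I_d -> C, \sum_(j < d) c j *: b j = 0 -> forall j, c j = 0) /\
    (forall v, S v -> exists c : 'I_d -> C, v = \sum_(j < d) c j *: b j).

(* The x^m-coefficient of D v only involves the coefficients of v at x^(m + e_j),
   j = 1, 2, 3, and the x_i-term is sigma_i applied to the coefficient at x^(m + e_i),
   times c(m_i + 1) with c(e) = e + k_i (1 - (-1)^e).  When 2 k_i = -t with t odd, c
   vanishes at e = t and at no e > t.  As sigma_i^2 = 1,
   the equation D v = 0 at x^(m - e_i) therefore expresses the coefficients of x_i-degree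
   m_i > t through those of x_i-degree m_i - 1, while x_i-degree t is unconstrained.  So an
   element of M_n(x_i) is freely and uniquely determined by its C^2-valued coefficients at
   the n - t + 1 monomials x_i^t x_p^a x_q^(n-t-a), giving dimension 2 (n - t + 1). *)

From HB Require Import structures.
From mathcomp Require Import all_boot all_order all_algebra.
From mathcomp Require Import mpoly.
From mathcomp Require Import ring zify.
Set Implicit Arguments. Unset Strict Implicit. Unset Printing Implicit Defensive.
Import GRing.Theory Num.Theory.
Local Open Scope ring_scope.

Lemma mcoeff_msuppE (n : nat) (R : ringType) (p : {mpoly R[n]}) m :
  \sum_(m' <- msupp p) p@_m' * (m' == m)%:R = p@_m.
Proof.
by rewrite [p in RHS]mpolyE raddf_sum; apply: eq_bigr => m' _ /=; rewrite mcoeffZ mcoeffX.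
Qed.

Lemma submUK (n : nat) (m : 'X_{1..n}) i : (0 < m i)%N -> (m - U_(i) + U_(i))%MM = m.
Proof. by move=> mi_gt0; apply/submK/mnm_lepP => j; rewrite mnm1E; case: eqP => // <-. Qed.

Lemma mcoeff_mpoly_bounded (n : nat) (R : ringType) (E : 'X_{1..n} -> R) b m :
  (forall m', (b <= mdeg m')%N -> E m' = 0) ->
  (\sum_(m' : 'X_{1..n < b}) E m' *: 'X_[m'])@_m = E m.
Proof.
move=> E0; have [/mcoeff_mpoly //|b_le] := ltnP (mdeg m) b.
rewrite E0 // raddf_sum big1 // => m' _ /=; rewrite mcoeffZ mcoeffX.
by case: eqP => [m'm|]; rewrite ?mulr0 //; move: b_le; rewrite -m'm leqNgt bmdeg.
Qed.

Lemma leq_mnm_mdeg (n : nat) (m : 'X_{1..n}) i : (m i <= mdeg m)%N.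
Proof. by rewrite mdegE (bigD1 i) //= leq_addr. Qed.

Lemma ordS3_neq (i : 'I_3) :
  [/\ ordS i != i, ordS (ordS i) != i & ordS (ordS i) != ordS i].
Proof. by case: i => [[|[|[|//]]] ?]. Qed.

Lemma ord3_cases (i j : 'I_3) : [|| j == i, j == ordS i | j == ordS (ordS i)].
Proof. by case: i j => [[|[|[|//]]] ?] [[|[|[|//]]] ?]. Qed.

Lemma mdeg3 (i : 'I_3) (m : 'X_{1..3}) :
  mdeg m = (m i + m (ordS i) + m (ordS (ordS i)))%N.
Proof.
have [si_i ssi_i ssi_si] := ordS3_neq i.
rewrite mdegE (bigD1 i) // (bigD1 (ordS i)) ?si_i // (bigD1 (ordS (ordS i))) ?ssi_i ?ssi_si //=.
rewrite big1 ?addn0 ?addnA // => j /andP[/andP[j_i j_si] j_ssi].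
by move: (ord3_cases i j); rewrite (negbTE j_ssi) (negbTE j_si) (negbTE j_i).
Qed.

Lemma dimC_eq0 (F : fieldType) (V : lmodType F) (S : V -> Prop) :
  (forall v, S v -> v = 0) -> dimC_eq S 0.
Proof.
move=> S0; exists (fun=> 0); split; [by case | split; first by move=> c _ []].
by move=> v /S0 ->; exists (fun=> 0); rewrite big_ord0.
Qed.

Lemma dimC_eq_card (F : fieldType) (V : lmodType F) (S : V -> Prop) (I : finType)
    (b : I -> V) :
  (forall p, S (b p)) ->
  (forall c : I -> F, \sum_p c p *: b p = 0 -> forall p, c p = 0) ->
  (forall v, S v -> exists c : I -> F, v = \sum_p c p *: b p) ->
  dimC_eq S #|I|.
Proof.
move=> Sb b_free b_span.
have reindexE (c : 'I_#|I| -> F) :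
    \sum_(j < #|I|) c j *: b (enum_val j) = \sum_p c (enum_rank p) *: b p.
  by rewrite (reindex enum_rank) //=; [apply: eq_bigr => p _; rewrite enum_rankK |
    exact/onW_bij/enum_rank_bij].
exists (fun j => b (enum_val j)); split=> [j|]; first exact: Sb.
split=> [c|v /b_span[c ->]].
  by rewrite reindexE => /b_free c0 j; rewrite -(enum_valK j) c0.
exists (fun j => c (enum_val j)); rewrite reindexE.
by apply: eq_bigr => p _; rewrite enum_rankK.
Qed.

Section Coefficients.
Variable C : numClosedFieldType.
Notation P := {mpoly C[3]}.

(* [T_j x^m = dunkl_coef (k j) (m j) x^(m - e_j)] *)
Definition dunkl_coef (kk : C) (e : nat) : C := e%:R + kk * (1 - (-1) ^+ e).

Lemma dunkl_coefE (kk : C) e : dunkl_coef kk e = e%:R + (if odd e then 2 * kk else 0).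
Proof. by rewrite /dunkl_coef -signr_odd; case: odd; rewrite ?subrr ?mulr0 // opprK mulrC. Qed.

Lemma dunkl_coef_odd_eq0 (kk : C) t : odd t -> 2 * kk = - t%:R -> dunkl_coef kk t = 0.
Proof. by move=> t_odd kt; rewrite dunkl_coefE t_odd kt subrr. Qed.

Lemma dunkl_coef_neq0 (kk : C) t e : 2 * kk = - t%:R -> (t < e)%N -> dunkl_coef kk e != 0.
Proof.
move=> kt t_lt; rewrite dunkl_coefE kt; case: odd.
  by rewrite subr_eq0 eqr_nat gtn_eqF.
by rewrite addr0 pnatr_eq0 -lt0n (leq_ltn_trans _ t_lt).
Qed.

Lemma refl_X (i : 'I_3) m : refl i ('X_[m] : P) = (-1) ^+ (m i) *: 'X_[m].
Proof.
have sign_X j : (if j == i then - 'X_j else 'X_j) = (if j == i then -1 else 1) *: 'X_j :> P.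
  by case: eqP; rewrite ?scaleN1r ?scale1r.
rewrite /refl comp_mpolyX mpolyXE_id.
under eq_bigr => j _ do rewrite tnth_mktuple sign_X exprZn.
rewrite scaler_prod (bigD1 i) //= eqxx big1 ?mulr1 // => j /negbTE ->.
by rewrite expr1n.
Qed.

Lemma mcoeff_refl (i : 'I_3) (f : P) m : (refl i f)@_m = (-1) ^+ (m i) * f@_m.
Proof.
rewrite -[f@_m]mcoeff_msuppE mulr_sumr [f in LHS]mpolyE /refl.
rewrite (raddf_sum (comp_mpoly _)) raddf_sum.
apply: eq_bigr => m' _ /=; rewrite comp_mpolyZ -/(refl i _) refl_X !mcoeffZ mcoeffX.
by case: eqP => [->|_]; rewrite ?mulr0 // mulrCA.
Qed.

Lemma mcoeff_divX (i : 'I_3) (g : P) m :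
  (forall m' : 'X_{1..3}, m' i = 0%N -> g@_m' = 0) -> (divX i g)@_m = g@_(m + U_(i)).
Proof.
move=> g0; rewrite -[RHS]mcoeff_msuppE /divX raddf_sum; apply: eq_bigr => m' _ /=.
rewrite mcoeffZ mcoeffX; have [/g0 ->|m'i_gt0] := posnP (m' i); first by rewrite !mul0r.
congr (_ * (_ : bool)%:R); apply/eqP/eqP => [<-|->]; last exact: addmK.
by rewrite submUK.
Qed.

Lemma mcoeff_dunkl (k : 'I_3 -> C) (j : 'I_3) (f : P) m :
  (dunkl k j f)@_m = dunkl_coef (k j) (m j).+1 * f@_(m + U_(j)).
Proof.
rewrite /dunkl mcoeffD mcoeffZ mcoeff_deriv mcoeff_divX; last first.
  by move=> m' m'j0; rewrite mcoeffB mcoeff_refl m'j0 mul1r subrr.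
rewrite mcoeffB mcoeff_refl mnmDE mnm1E eqxx addn1 /dunkl_coef -mulr_natl.
ring.
Qed.
End Coefficients.

Section Spinors.
Variable C : numClosedFieldType.
Notation P := {mpoly C[3]}.
Notation spinor := {ffun 'I_2 -> P}.

Lemma sigma_sqr (j : 'I_3) : sigma C j *m sigma C j = 1%:M.
Proof.
apply/matrixP => r s; rewrite !mxE !big_ord_recr big_ord0 /sigma.
case: j => [[|[|[|//]]] _] /=; rewrite !mxE;
  case: r => [[|[|//]] ?]; case: s => [[|[|//]] ?] /=;
  by rewrite ?(mul0r, mulr0, add0r, addr0, mul1r, mulr1, mulrNN, mulNr, mulrN)
     -?expr2 ?sqrCi ?opprK.
Qed.

Definition mcoeffv (m : 'X_{1..3}) (v : spinor) : 'cV[C]_2 := \col_r (v r)@_m.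

Lemma mcoeffv_is_linear m : linear (mcoeffv m).
Proof. by move=> a u w; apply/matrixP => r s; rewrite !mxE !ffunE mcoeffD mcoeffZ. Qed.

HB.instance Definition _ m := GRing.isLinear.Build C spinor 'cV[C]_2 _ (mcoeffv m)
  (mcoeffv_is_linear m).

Lemma mcoeffvP (v w : spinor) : (forall m, mcoeffv m v = mcoeffv m w) -> v = w.
Proof.
move=> vw; apply/ffunP => r; apply/mpolyP => m.
by have /matrixP/(_ r 0) := vw m; rewrite !mxE.
Qed.

Lemma mcoeffv_dirac (k : 'I_3 -> C) (v : spinor) m :
  mcoeffv m (dirac k v) =
  \sum_(j < 3) dunkl_coef (k j) (m j).+1 *: (sigma C j *m mcoeffv (m + U_(j)) v).
Proof.
apply/matrixP => r s; rewrite !mxE ffunE raddf_sum summxE; apply: eq_bigr => j _.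
rewrite !mxE raddf_sum mulr_sumr; apply: eq_bigr => s' _ /=.
by rewrite mcoeffZ mcoeff_dunkl !mxE mulrCA.
Qed.

Lemma dirac_linearP (k : 'I_3 -> C) a (u w : spinor) :
  dirac k (a *: u + w) = a *: dirac k u + dirac k w.
Proof.
apply: mcoeffvP => m.
(* Targeted rewrites: matching [dirac k _] against the other columns would unfold
   finite functions and take minutes. *)
rewrite mcoeffv_is_linear [X in X = _]mcoeffv_dirac.
rewrite [X in _ = _ *: X + _]mcoeffv_dirac [X in _ = _ + X]mcoeffv_dirac.
rewrite scaler_sumr -big_split; apply: eq_bigr => j _ /=.
by rewrite mcoeffv_is_linear mulmxDr scalerDr !scalemxAr !scalerA mulrC.
Qed.

HB.instance Definition _ k :=
  GRing.isLinear.Build C spinor spinor _ (dirac k) (dirac_linearP k).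

Lemma dirac_eq0_at (k : 'I_3 -> C) (v : spinor) (m : 'X_{1..3}) : dirac k v = 0 ->
  \sum_(j < 3) dunkl_coef (k j) (m j).+1 *: (sigma C j *m mcoeffv (m + U_(j)) v) = 0.
Proof. by move=> Dv0; rewrite -mcoeffv_dirac Dv0 linear0. Qed.

Lemma sigma_mulmx_eq0 (j : 'I_3) (x : 'cV[C]_2) : sigma C j *m x = 0 -> x = 0.
Proof. by move=> sx0; rewrite -[x]mul1mx -(sigma_sqr j) -mulmxA sx0 mulmx0. Qed.

Lemma dirac_ker_eq0 (k : 'I_3 -> C) (i : 'I_3) (t : nat) (w : spinor) :
  (forall e, (t < e)%N -> dunkl_coef (k i) e != 0) -> dirac k w = 0 ->
  (forall m : 'X_{1..3}, (m i <= t)%N -> mcoeffv m w = 0) -> w = 0.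
Proof.
move=> ck_neq0 Dw0 w0.
suff lev_w0 e (m : 'X_{1..3}) : (m i <= e)%N -> mcoeffv m w = 0.
  by apply: mcoeffvP => m; rewrite (lev_w0 (m i)) // linear0.
elim: e m => [|e IHe] m mi_le; first by apply: w0; rewrite (leq_trans mi_le).
have [|t_lt_mi] := leqP (m i) t; first exact: w0.
have [|e_lt_mi] := leqP (m i) e; first exact: IHe.
have mi_gt0 : (0 < m i)%N by rewrite (leq_trans _ e_lt_mi).
set m' := (m - U_(i))%MM.
have m'iS : (m' i).+1 = m i by rewrite mnmBE mnm1E eqxx subn1 prednK.
have := dirac_eq0_at m' Dw0; rewrite (bigD1 i) //= big1 ?addr0 => [|j j_neq_i].
  rewrite m'iS submUK // => /eqP; rewrite scaler_eq0 (negbTE (ck_neq0 _ t_lt_mi)).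
  by move/eqP/sigma_mulmx_eq0.
rewrite IHe ?mulmx0 ?scaler0 // mnmDE mnm1E (negbTE j_neq_i) addn0.
by rewrite -ltnS m'iS.
Qed.

End Spinors.

Section Extension.
Variables (C : numClosedFieldType) (k : 'I_3 -> C) (i : 'I_3) (t n : nat).
Variable init : 'X_{1..3} -> 'cV[C]_2.
Notation spinor := {ffun 'I_2 -> {mpoly C[3]}}.

Definition transverse (F : 'X_{1..3} -> 'cV[C]_2) (m : 'X_{1..3}) :=
  \sum_(j < 3 | j != i) dunkl_coef (k j) (m j).+1 *: (sigma C j *m F (m + U_(j))%MM).

(* Coefficients at x_i-degree t + d: the kernel equation at x^(m - e_i), solved for its
   x_i-term with sigma_i^2 = 1. *)
Fixpoint ext_coef (d : nat) (m : 'X_{1..3}) : 'cV[C]_2 :=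
  if d is d'.+1 then
    - (dunkl_coef (k i) (m i))^-1 *: (sigma C i *m transverse (ext_coef d') (m - U_(i))%MM)
  else init m.

Definition ext_mcoeff (m : 'X_{1..3}) : 'cV[C]_2 :=
  if (mdeg m == n) && (t <= m i)%N then ext_coef (m i - t) m else 0.

Definition extension : spinor :=
  [ffun r => \sum_(m : 'X_{1..3 < n.+1}) ext_mcoeff m r 0 *: 'X_[m]].

Lemma mcoeffv_extension (m : 'X_{1..3}) : mcoeffv m extension = ext_mcoeff m.
Proof.
apply/matrixP => r s; rewrite !mxE ffunE ord1.
rewrite (@mcoeff_mpoly_bounded _ _ (fun m => ext_mcoeff m r 0)) // => m' n_lt.
by rewrite /ext_mcoeff gtn_eqF // mxE.
Qed.

Lemma ext_coefS d (m : 'X_{1..3}) : ext_coef d.+1 (m + U_(i))%MM =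
  - (dunkl_coef (k i) (m i).+1)^-1 *: (sigma C i *m transverse (ext_coef d) m).
Proof. by rewrite /= addmK mnmDE mnm1E eqxx addn1. Qed.

Lemma mcoeff_extension r m : (extension r)@_m = ext_mcoeff m r 0.
Proof. by rewrite -mcoeffv_extension mxE. Qed.

Hypothesis ck_neq0 : forall e, (t < e)%N -> dunkl_coef (k i) e != 0.
Hypothesis ck_t : dunkl_coef (k i) t = 0.

Lemma dirac_extension : dirac k extension = 0.
Proof.
apply: mcoeffvP => m; rewrite [RHS]linear0 [LHS]mcoeffv_dirac.
under eq_bigr => j _ do rewrite mcoeffv_extension.
have mdeg_mU j : mdeg (m + U_(j)) = (mdeg m).+1 by rewrite mdegD mdeg1 addn1.
have [deg_m|/negbTE deg_m] := eqVneq (mdeg m).+1 n; last first.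
  by rewrite big1 // => j _; rewrite /ext_mcoeff mdeg_mU deg_m mulmx0 scaler0.
have mUiE : (m + U_(i))%MM i = (m i).+1 by rewrite mnmDE mnm1E eqxx addn1.
have mUjE j : j != i -> (m + U_(j))%MM i = m i.
  by move=> /negbTE j_neq_i; rewrite mnmDE mnm1E j_neq_i addn0.
rewrite (bigD1 i) //=; have [mi_lt|t_le_mi] := ltnP (m i) t.
  rewrite big1 => [|j /mUjE mUj_i]; last first.
    by rewrite /ext_mcoeff mUj_i leqNgt mi_lt andbF mulmx0 scaler0.
  rewrite /ext_mcoeff mUiE andbC; case: leqP => [t_le|]; last by rewrite mulmx0 scaler0 addr0.
  have -> : (m i).+1 = t by apply/eqP; rewrite eqn_leq mi_lt t_le.
  by rewrite ck_t scale0r addr0.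
have -> : \sum_(j < 3 | j != i)
      dunkl_coef (k j) (m j).+1 *: (sigma C j *m ext_mcoeff (m + U_(j)))
    = transverse (ext_coef (m i - t)) m.
  apply: eq_bigr => j /mUjE mUj_i.
  by rewrite /ext_mcoeff mdeg_mU deg_m eqxx mUj_i t_le_mi.
rewrite /ext_mcoeff mdeg_mU deg_m eqxx mUiE (leqW t_le_mi) subSn // ext_coefS.
have cki_neq0 : dunkl_coef (k i) (m i).+1 != 0 by rewrite ck_neq0 // ltnS.
by rewrite -scalemxAr mulmxA sigma_sqr mul1mx scalerA mulrN mulfV // scaleN1r addNr.
Qed.

Lemma extension_Mnx : Mnx k n i (Some t) extension.
Proof.
have supp r m : m \in msupp (extension r) -> (mdeg m == n) && (t <= m i)%N.
  by rewrite mcoeff_msupp mcoeff_extension /ext_mcoeff; case: ifP; rewrite ?mxE ?eqxx.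
by split; [split; last exact: dirac_extension | ] => r m /supp /andP[] // /eqP.
Qed.

End Extension.

Lemma Mnx_mcoeff_eq0 (C : numClosedFieldType) k n i t (v : {ffun 'I_2 -> {mpoly C[3]}}) r m :
  Mnx k n i (Some t) v -> ~~ ((mdeg m == n) && (t <= m i)%N) -> (v r)@_m = 0.
Proof.
move=> [[hom _] supp] out; apply/eqP; apply: contraNT out; rewrite -mcoeff_msupp => m_in.
by rewrite (hom r) // eqxx (supp r).
Qed.

Section LevelBasis.
Variables (C : numClosedFieldType) (k : 'I_3 -> C) (i : 'I_3) (t n : nat).
Hypothesis ck_neq0 : forall e, (t < e)%N -> dunkl_coef (k i) e != 0.
Hypothesis ck_t : dunkl_coef (k i) t = 0.
Hypothesis t_le_n : (t <= n)%N.
Notation spinor := {ffun 'I_2 -> {mpoly C[3]}}.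
Local Notation N := (n - t + 1)%N.

Definition level_mnm (a : nat) : 'X_{1..3} :=
  [multinom if l == i then t else if l == ordS i then a else (n - t - a)%N | l < 3].

Lemma level_mnm_i a : level_mnm a i = t.
Proof. by rewrite mnmE eqxx. Qed.

Lemma level_mnm_inj : injective level_mnm.
Proof.
have [si_i _ _] := ordS3_neq i.
by move=> a b /(congr1 (fun m : 'X_{1..3} => m (ordS i))); rewrite !mnmE (negbTE si_i) eqxx.
Qed.

Lemma mdeg_level_mnm a : (a < N)%N -> mdeg (level_mnm a) = n.
Proof.
have [si_i ssi_i ssi_si] := ordS3_neq i.
rewrite (mdeg3 i) !mnmE eqxx (negbTE si_i) (negbTE ssi_i) (negbTE ssi_si) eqxx; lia.
Qed.

Lemma level_mnm_surj (m : 'X_{1..3}) : m i = t -> mdeg m = n ->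
  exists a : 'I_N, m = level_mnm a.
Proof.
move=> mi deg_m; have deg3 := mdeg3 i m; rewrite deg_m mi in deg3.
have a_lt : (m (ordS i) < N)%N by lia.
exists (Ordinal a_lt); apply/mnmP => l; rewrite mnmE /=.
have := ord3_cases i l; case: eqP => [-> //|_]; case: eqP => [-> //|_] /= /eqP ->; lia.
Qed.

Definition level_basis (p : 'I_2 * 'I_N) : spinor :=
  extension k i t n (fun m => if m == level_mnm p.2 then delta_mx p.1 0 else 0).

Lemma mcoeff_level_basis p r (m : 'X_{1..3}) : m i = t ->
  (level_basis p r)@_m = ((m == level_mnm p.2) && (r == p.1))%:R.
Proof.
move=> mi; rewrite mcoeff_extension /ext_mcoeff mi leqnn subnn andbT /=.
case: eqP => [deg_m|deg_m]; first by case: eqP; rewrite !mxE ?andbT.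
case: eqP => [m_eq|]; last by rewrite mxE.
by move: deg_m; rewrite m_eq mdeg_level_mnm.
Qed.

Lemma mcoeff_level_comb (c : 'I_2 * 'I_N -> C) r (a : 'I_N) :
  ((\sum_p c p *: level_basis p) r)@_(level_mnm a) = c (r, a).
Proof.
rewrite sum_ffunE raddf_sum (bigD1 (r, a)) //= big1 ?addr0 => [|[r' a'] ra_neq].
  by rewrite ffunE mcoeffZ mcoeff_level_basis ?level_mnm_i // !eqxx mulr1.
rewrite ffunE mcoeffZ mcoeff_level_basis ?level_mnm_i //=.
have [/level_mnm_inj/val_inj a_eq|] := eqVneq (level_mnm a) (level_mnm a').
  move: ra_neq; rewrite -a_eq xpair_eqE eqxx andbT eq_sym => /negbTE ->.
  by rewrite mulr0.
by rewrite mulr0.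
Qed.

Lemma level_basis_free (c : 'I_2 * 'I_N -> C) :
  \sum_p c p *: level_basis p = 0 -> forall p, c p = 0.
Proof. by move=> c0 [r a]; rewrite -mcoeff_level_comb c0 ffunE mcoeff0. Qed.

Lemma level_basis_span (v : spinor) : Mnx k n i (Some t) v ->
  exists c : 'I_2 * 'I_N -> C, v = \sum_p c p *: level_basis p.
Proof.
move=> Mv; exists (fun p : 'I_2 * 'I_N => (v p.1)@_(level_mnm p.2)).
apply/eqP; rewrite -subr_eq0.
apply/eqP/(dirac_ker_eq0 ck_neq0).
  rewrite linearB linear_sum /= big1 ?subr0 => [|p _]; first by case: Mv => [[_ ->]].
  by rewrite linearZ /= dirac_extension ?scaler0.
move=> m mi_le; apply/matrixP => r s; rewrite ord1 !mxE !ffunE mcoeffB.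
have [/andP[/eqP deg_m t_le_mi] | out] := boolP ((mdeg m == n) && (t <= m i)%N).
  have mi : m i = t by apply/eqP; rewrite eqn_leq mi_le t_le_mi.
  by have [a ->] := level_mnm_surj mi deg_m; rewrite mcoeff_level_comb subrr.
rewrite (Mnx_mcoeff_eq0 _ Mv out) sum_ffunE raddf_sum big1 ?subrr // => p _.
by rewrite ffunE /= mcoeffZ (Mnx_mcoeff_eq0 _ (extension_Mnx _ _ ck_neq0 ck_t) out) mulr0.
Qed.

Lemma dimC_Mnx : dimC_eq (Mnx k n i (Some t)) (2 * (n - t + 1)).
Proof.
have -> : (2 * N = #|{: 'I_2 * 'I_N}|)%N by rewrite card_prod !card_ord.
apply: (dimC_eq_card (b := level_basis)) => [p||].
- exact: extension_Mnx.
- exact: level_basis_free.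
- exact: level_basis_span.
Qed.

End LevelBasis.

Theorem proposition3p3 (C : numClosedFieldType) (k : 'I_3 -> C)
    (hk : forall j, k j \is Num.real) (n : nat) (i : 'I_3) (t : option nat) :
  tparam (k i) t ->
  match t with
  | Some t =>
      ((n < t)%N -> dimC_eq (@Mnx C k n i (Some t)) 0) /\
      ((t <= n)%N -> dimC_eq (@Mnx C k n i (Some t)) (2 * (n - t + 1)))
  | None => dimC_eq (@Mnx C k n i None) 0
  end.
Proof.
case: t => [t [t_odd kt]|_] /=; last by apply: dimC_eq0 => v ->.
split=> [n_lt_t | t_le_n]; last first.
  apply: dimC_Mnx => // [e|]; [exact: dunkl_coef_neq0 | exact: dunkl_coef_odd_eq0].
apply: dimC_eq0 => v Mv; apply/ffunP => r; apply/mpolyP => m.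
rewrite ffunE mcoeff0 (Mnx_mcoeff_eq0 _ Mv) //; apply/negP => /andP[/eqP deg_m].
by rewrite leqNgt (leq_ltn_trans _ n_lt_t) // -deg_m leq_mnm_mdeg.
Qed.
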